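(* Let $A^1,\ldots,A^M\in\mathbb{R}^{m,n}$ be matrices whose columns have Euclidean norm $1$. If \[ M-2\sum_{1\le i<j\le M}\mathcal{M}_D(A^i,A^j)>0, \] then \[ \mathcal{M}\Bigl(\sum_{i=1}^M A^i\Bigr)\le\frac{\sum_{i=1}^M\mathcal{M}(A^i)+2\sum_{1\le i<j\le M}\mathcal{M}_{OD}(A^i,A^j)}{M-2\sum_{1\le i<j\le M}\mathcal{M}_D(A^i,A^j)}. \]
   Context: For $C=[c_1,\ldots,c_n]$ with columns of norm $1$, $\mathcal{M}(C)=\max_{i\ne j}|\langle c_i,c_j\rangle|$. For a matrix $C=[c_1,\ldots,c_n]$ with nonzero but not necessarily normalized columns (such as $\sum_i A^i$), $\mathcal{M}(C)$ means $\max_{i\ne j}\frac{|\langle c_i,c_j\rangle|}{\|c_i\|_2\|c_j\|_2}$. For $A=[a_1,\ldots,a_n]$, $B=[b_1,\ldots,b_n]$ with normalized columns, $\mathcal{M}_{OD}(A,B)=\max_{i\ne j}|\langle a_i,b_j\rangle|$ and $\mathcal{M}_D(A,B)=\max_i|\langle a_i,b_i\rangle|$. *)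

From mathcomp Require Import all_boot all_order all_algebra.
Set Implicit Arguments. Unset Strict Implicit. Unset Printing Implicit Defensive.
Import Order.TTheory GRing.Theory Num.Theory.
Local Open Scope ring_scope.

Definition coldot (R : rcfType) (m n : nat) (A B : 'M[R]_(m, n)) (i j : 'I_n) : R :=
  \sum_(k < m) A k i * B k j.

Definition colnorm (R : rcfType) (m n : nat) (A : 'M[R]_(m, n)) (i : 'I_n) : R :=
  Num.sqrt (coldot A A i i).

Definition unit_columns (R : rcfType) (m n : nat) (A : 'M[R]_(m, n)) : Prop :=
  forall i : 'I_n, colnorm A i = 1.

(* Mutual coherence, normalized version: max_{i<>j} |<c_i,c_j>|/(||c_i|| ||c_j||).
   For unit-norm columns this is max_{i<>j} |<c_i,c_j>|.  The empty max is 0. *)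
Definition coherence (R : rcfType) (m n : nat) (C : 'M[R]_(m, n)) : R :=
  \big[Num.max/0]_(i < n) \big[Num.max/0]_(j < n | i != j)
     (`|coldot C C i j| / (colnorm C i * colnorm C j)).

Definition coherence_OD (R : rcfType) (m n : nat) (A B : 'M[R]_(m, n)) : R :=
  \big[Num.max/0]_(i < n) \big[Num.max/0]_(j < n | i != j) `|coldot A B i j|.

Definition coherence_D (R : rcfType) (m n : nat) (A B : 'M[R]_(m, n)) : R :=
  \big[Num.max/0]_(i < n) `|coldot A B i i|.

From mathcomp Require Import all_boot all_order all_algebra.
From mathcomp Require Import lra.
Set Implicit Arguments. Unset Strict Implicit.
Import Order.TTheory GRing.Theory Num.Theory.
Local Open Scope ring_scope.

(* Write S for the sum of the A^l.  Bilinearity expands the Gram entry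
   <S_p, S_q> into the diagonal terms <A^l_p, A^l_q> plus, for each pair l < k,
   the two cross terms <A^l_p, A^k_q> + <A^k_p, A^l_q>.  For p <> q these are
   bounded by M(A^l) and 2 M_OD(A^l, A^k), which bounds the numerator; for
   p = q the diagonal terms equal 1 and the cross terms are at least
   -2 M_D(A^l, A^k), so every column of S has squared norm at least the
   denominator D.  Dividing by ||S_p|| ||S_q|| >= D gives the claim. *)

Section BigMax0.

Variables (R : realDomainType) (n : nat) (P : pred 'I_n) (F : 'I_n -> R).

Lemma le_bigmax0 i0 : P i0 -> F i0 <= \big[Num.max/0]_(i < n | P i) F i.
Proof. by move=> Pi0; rewrite (bigD1 i0) //= le_max lexx. Qed.

Lemma bigmax0_ge0 : 0 <= \big[Num.max/0]_(i < n | P i) F i.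
Proof. by apply: (big_rec (fun x => 0 <= x)) => // i x _ hx; rewrite le_max hx orbT. Qed.

Lemma bigmax0_le X :
  0 <= X -> (forall i, P i -> F i <= X) -> \big[Num.max/0]_(i < n | P i) F i <= X.
Proof.
by move=> X0 FX; apply: (big_ind (fun x => x <= X)) => // x y hx hy; rewrite ge_max hx hy.
Qed.

End BigMax0.

Lemma sum_ord_pairs (R : nmodType) (M : nat) (f : 'I_M -> 'I_M -> R) :
  \sum_(l < M) \sum_(k < M) f l k =
  \sum_(l < M) f l l + \sum_(l < M) \sum_(k < M | (l < k)%N) (f l k + f k l).
Proof.
have split_row l : \sum_(k < M) f l k =
    f l l + \sum_(k < M | (l < k)%N) f l k + \sum_(k < M | (k < l)%N) f l k.
  rewrite (bigD1 l) //= -addrA (bigID (fun k : 'I_M => (l < k)%N)) /=.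
  by congr (_ + (_ + _)); apply: eq_bigl => k; rewrite -val_eqE /=; case: ltngtP.
rewrite (eq_bigr _ (fun l _ => split_row l)) !big_split /= -addrA.
congr (_ + _); rewrite [X in _ + X](exchange_big_dep xpredT) //= -big_split /=.
by apply: eq_bigr => l _; rewrite -big_split.
Qed.

Section ColumnInnerProducts.

Variables (R : rcfType) (m n : nat).
Implicit Types A B C : 'M[R]_(m, n).

Lemma coldotC A B p q : coldot B A p q = coldot A B q p.
Proof. by apply: eq_bigr => r _; rewrite mulrC. Qed.

Lemma coldot_sum M (A : 'I_M -> 'M[R]_(m, n)) p q :
  coldot (\sum_(l < M) A l) (\sum_(l < M) A l) p q =
  \sum_(l < M) \sum_(k < M) coldot (A l) (A k) p q.
Proof.
rewrite /coldot; under eq_bigr => r _ do rewrite !summxE mulr_suml.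
rewrite exchange_big /=; apply: eq_bigr => l _.
by under eq_bigr => r _ do rewrite mulr_sumr; rewrite exchange_big.
Qed.

Lemma coldot_ge0 A p : 0 <= coldot A A p p.
Proof. by apply: sumr_ge0 => k _; rewrite -expr2 sqr_ge0. Qed.

Lemma sqr_colnorm A p : colnorm A p ^+ 2 = coldot A A p p.
Proof. exact/sqr_sqrtr/coldot_ge0. Qed.

Lemma coldot_unit A p : unit_columns A -> coldot A A p p = 1.
Proof. by move=> A1; rewrite -sqr_colnorm A1 expr1n. Qed.

Lemma coldot_le_coherence A p q :
  unit_columns A -> p != q -> `|coldot A A p q| <= coherence A.
Proof.
move=> A1 pq; apply: le_trans (le_bigmax0 (P := xpredT) _ (isT : xpredT p)).
apply: le_trans (le_bigmax0 (P := fun j => p != j) _ pq).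
by rewrite /= !A1 mulr1 divr1.
Qed.

Lemma coldot_le_coherence_OD A B p q :
  p != q -> `|coldot A B p q| <= coherence_OD A B.
Proof.
move=> pq; apply: le_trans (le_bigmax0 (P := xpredT) _ (isT : xpredT p)).
exact: (le_bigmax0 (P := fun j => p != j) (fun j => `|coldot A B p j|)).
Qed.

Lemma coldot_le_coherence_D A B p : `|coldot A B p p| <= coherence_D A B.
Proof. exact: (le_bigmax0 (P := xpredT) (fun i => `|coldot A B i i|)). Qed.

Lemma coherence_le_div C d N :
  0 < d -> 0 <= N -> (forall p, d <= coldot C C p p) ->
  (forall p q, p != q -> `|coldot C C p q| <= N) ->
  coherence C <= N / d.
Proof.
move=> d0 N0 Cd CN; have Nd0 : 0 <= N / d by rewrite divr_ge0 // ltW.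
apply: bigmax0_le => // p _; apply: bigmax0_le => // q pq.
have sqrt_d_le r : Num.sqrt d <= colnorm C r.
  by rewrite ler_sqrt ?Cd // (le_trans (ltW d0) (Cd r)).
have d_le_norms : d <= colnorm C p * colnorm C q.
  rewrite -[leLHS](sqr_sqrtr (ltW d0)) expr2.
  by apply: ler_pM; rewrite ?sqrtr_ge0 ?sqrt_d_le.
apply: (@le_trans _ _ (N / (colnorm C p * colnorm C q))).
  by apply: ler_wpM2r; [rewrite invr_ge0 (le_trans (ltW d0)) | exact: CN].
by rewrite ler_wpM2l // lef_pV2 ?posrE // (lt_le_trans d0).
Qed.

End ColumnInnerProducts.

Section SumOfMatrices.

Variables (R : rcfType) (m n M : nat) (A : 'I_M -> 'M[R]_(m, n)).
Hypothesis A1 : forall l, unit_columns (A l).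

Lemma coldot_sum_diag_ge p :
  M%:R - 2 * \sum_(i < M) \sum_(j < M | (i < j)%N) coherence_D (A i) (A j)
  <= coldot (\sum_(l < M) A l) (\sum_(l < M) A l) p p.
Proof.
rewrite coldot_sum sum_ord_pairs (eq_bigr _ (fun l _ => coldot_unit p (A1 l))).
rewrite sumr_const card_ord -mulr_natr mul1r lerD2l mulr_sumr -sumrN ler_sum // => l _.
rewrite mulr_sumr -sumrN ler_sum // => k _.
have := coldot_le_coherence_D (A l) (A k) p; rewrite coldotC ler_norml => /andP[].
lra.
Qed.

Lemma coldot_sum_offdiag_le p q : p != q ->
  `|coldot (\sum_(l < M) A l) (\sum_(l < M) A l) p q| <=
    \sum_(i < M) coherence (A i)
      + 2 * \sum_(i < M) \sum_(j < M | (i < j)%N) coherence_OD (A i) (A j).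
Proof.
move=> pq; rewrite coldot_sum sum_ord_pairs.
apply: le_trans (ler_normD _ _) _; apply: lerD.
  apply: le_trans (ler_norm_sum _ _ _) _.
  by apply: ler_sum => l _; apply: coldot_le_coherence.
rewrite mulr_sumr; apply: le_trans (ler_norm_sum _ _ _) _; apply: ler_sum => l _.
rewrite mulr_sumr; apply: le_trans (ler_norm_sum _ _ _) _; apply: ler_sum => k _.
apply: le_trans (ler_normD _ _) _; rewrite mulr_natl mulr2n.
apply: lerD; first exact: coldot_le_coherence_OD.
by rewrite coldotC coldot_le_coherence_OD // eq_sym.
Qed.

End SumOfMatrices.

Theorem corollary4p6 (R : rcfType) (m n M : nat) (A : 'I_M -> 'M[R]_(m, n)) :
  (forall l : 'I_M, unit_columns (A l)) ->
  0 < M%:R - 2 * \sum_(i < M) \sum_(j < M | (i < j)%N) coherence_D (A i) (A j) ->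
  coherence (\sum_(l < M) A l) <=
    (\sum_(i < M) coherence (A i)
       + 2 * \sum_(i < M) \sum_(j < M | (i < j)%N) coherence_OD (A i) (A j))
    / (M%:R - 2 * \sum_(i < M) \sum_(j < M | (i < j)%N) coherence_D (A i) (A j)).
Proof.
move=> A1 D0; apply: coherence_le_div => //.
- rewrite addr_ge0 ?mulr_ge0 ?sumr_ge0 // => *; first exact: bigmax0_ge0.
  by rewrite sumr_ge0 // => *; exact: bigmax0_ge0.
- exact: coldot_sum_diag_ge.
- exact: coldot_sum_offdiag_le.
Qed.
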